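(* In the setting described in the context, assume A1$'$, A2 and A3. If there exists $k^\star\in\{1,\dots,K\}$ with $\inf_{\mathbf w\in\mathcal W^*}w_{k^\star}>\frac12$, then $\liminf_{n\to\infty}\Pr\big(Y\in\mathcal C_{\mathrm{comb}}(\mathbf X;\mathcal D_n)\big)\ge1-\alpha$.
   Context: Setting: fix $K\ge2$ and $\alpha\in(0,1)$. For each sample size $n$, on a common probability space there are a random data set $\mathcal D_n$ and a random test pair $(\mathbf X,Y)$ with $\mathbf X\in\mathcal X\subseteq\mathbb R^p$, $Y\in\mathbb R$. For each $k\in\{1,\dots,K\}$ there is a random prediction set $\mathcal C_k(\mathbf X;\mathcal D_n)\subseteq\mathbb R$, determined by $\mathcal D_n$ and $\mathbf X$, such that the events $\{Y\in\mathcal C_k(\mathbf X;\mathcal D_n)\}$ are measurable. Let $\Delta^{K-1}=\{\mathbf w\in[0,1]^K:w_k\ge0,\sum_k w_k=1\}$ and let $\widehat{\mathbf w}_n=(\widehat w_{n,1},\dots,\widehat w_{n,K})$ be a $\sigma(\mathcal D_n)$-measurable random vector in $\Delta^{K-1}$. Let $\mathcal W^*\subseteq\Delta^{K-1}$ be a nonempty closed convex set; $\|\cdot\|$ is the Euclidean norm. A1$'$: $\sup_{k\in\{1,\dots,K\}}\big|\Pr(Y\notin\mathcal C_k(\mathbf X;\mathcal D_n)\mid\mathcal D_n)-\alpha\big|\to0$ in probability as $n\to\infty$. A2: $\inf_{\mathbf w\in\mathcal W^*}\|\widehat{\mathbf w}_n-\mathbf w\|\to0$ in probability as $n\to\infty$.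 A3: $\mathcal C_{\mathrm{comb}}(\mathbf X;\mathcal D_n):=\{y\in\mathbb R:\sum_{k=1}^K\widehat w_{n,k}\mathbf 1\{y\in\mathcal C_k(\mathbf X;\mathcal D_n)\}>1/2\}$. *)

From HB Require Import structures.
From mathcomp Require Import all_boot all_order all_algebra.
From mathcomp Require Import all_classical all_reals all_analysis.
Set Implicit Arguments. Unset Strict Implicit. Unset Printing Implicit Defensive.
Import Order.TTheory GRing.Theory Num.Theory.
Import numFieldNormedType.Exports.
Local Open Scope classical_set_scope.
Local Open Scope ring_scope.

Section Defs.
Context {d : measure_display} {T : measurableType d} {R : realType}.

Definition eucl_norm (K : nat) (v : 'rV[R]_K) : R :=
  Num.sqrt (\sum_(i < K) v 0 i ^+ 2).

Definition eucl_dist (K : nat) (v : 'rV[R]_K) (W : set 'rV[R]_K) : R :=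
  inf [set eucl_norm (v - w) | w in W].

Definition simplex (K : nat) : set 'rV[R]_K :=
  [set v | (forall i, 0 <= v 0 i) /\ \sum_(i < K) v 0 i = 1].

Definition sigma_measurable {dD} {DT : measurableType dD}
  (D : T -> DT) (f : T -> R) : Prop :=
  forall B : set R, measurable B ->
    exists A : set DT, measurable A /\ f @^-1` B = D @^-1` A.

Definition is_cond_prob (P : probability T R) {dD} {DT : measurableType dD}
  (D : T -> DT) (E : set T) (g : T -> R) : Prop :=
  [/\ sigma_measurable D g,
      P.-integrable setT (EFin \o g) &
      forall A : set DT, measurable A ->
        (\int[P]_(t in D @^-1` A) (g t)%:E = P (E `&` D @^-1` A))%E].

Definition cvg_in_prob (P : probability T R) (Z : nat -> T -> R) (c : R) : Prop :=
  forall eps : R, 0 < eps ->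
    (fun n => P [set t | eps < `|Z n t - c|]) @ \oo --> 0%E.

Definition Ccomb (K : nat) (w : 'rV[R]_K) (C : 'I_K -> set R) : set R :=
  [set y | 1 / 2 < \sum_(k < K) w 0 k * (y \in C k)%:R].

End Defs.
Arguments simplex {R} K.

From HB Require Import structures.
From mathcomp Require Import all_boot all_order all_algebra.
From mathcomp Require Import all_classical all_reals all_analysis.
From mathcomp Require Import ring lra measurable_realfun.
Set Implicit Arguments. Unset Strict Implicit. Unset Printing Implicit Defensive.
Import Order.TTheory GRing.Theory Num.Theory.
Import numFieldNormedType.Exports.
Local Open Scope classical_set_scope.
Local Open Scope ring_scope.

(* Let G be the event that the set of method [kstar] covers Y.  Where
   [what_kstar > 1/2] the combined set contains that set, so
   P(comb) >= P(G) - P(what_kstar <= 1/2).  Every w in [Wstar] has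
   [w_kstar >= 1/2 + delta], hence [what_kstar <= 1/2] forces
   [dist(what, Wstar) >= delta], an event of vanishing probability by A2.
   Finally P(not G) = E[g_kstar] <= alpha + e + P(g_kstar > alpha + e),
   and the last term vanishes by A1'.  The only technical point is the
   measurability of [t |-> dist(what t, Wstar)]. *)

Section EuclideanNorm.
Variable R : realType.

Lemma lagrange_identity (K : nat) (a b : 'I_K -> R) :
  \sum_i \sum_j (a i * b j - a j * b i) ^+ 2 =
  2 * ((\sum_i a i ^+ 2) * (\sum_i b i ^+ 2) - (\sum_i a i * b i) ^+ 2).
Proof.
have sq i j : (a i * b j - a j * b i) ^+ 2 =
    a i ^+ 2 * b j ^+ 2 + a j ^+ 2 * b i ^+ 2 - 2 * ((a i * b i) * (a j * b j)).
  by ring.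
have prod_sq : \sum_i \sum_j a i ^+ 2 * b j ^+ 2 =
    (\sum_i a i ^+ 2) * (\sum_i b i ^+ 2).
  by rewrite mulr_suml; apply: eq_bigr => i _; rewrite mulr_sumr.
have cross : \sum_i \sum_j 2 * ((a i * b i) * (a j * b j)) =
    2 * (\sum_i a i * b i) ^+ 2.
  rewrite expr2 mulr_suml mulr_sumr; apply: eq_bigr => i _.
  by rewrite !mulr_sumr; apply: eq_bigr => j _; ring.
transitivity (\sum_i \sum_j a i ^+ 2 * b j ^+ 2 + \sum_i \sum_j a j ^+ 2 * b i ^+ 2
    - \sum_i \sum_j 2 * ((a i * b i) * (a j * b j))).
  under eq_bigr do under eq_bigr do rewrite sq.
  by rewrite -big_split -sumrB; apply: eq_bigr => i _; rewrite -big_split -sumrB.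
by rewrite [X in _ + X - _]exchange_big /= prod_sq cross; ring.
Qed.

Lemma CauchySchwarz_sum (K : nat) (a b : 'I_K -> R) :
  (\sum_i a i * b i) ^+ 2 <= (\sum_i a i ^+ 2) * (\sum_i b i ^+ 2).
Proof.
have : 0 <= \sum_i \sum_j (a i * b j - a j * b i) ^+ 2.
  by do 2!(apply: sumr_ge0 => ? _); exact: sqr_ge0.
by rewrite lagrange_identity pmulr_rge0 // subr_ge0.
Qed.

Lemma sum_sqr_ge0 (K : nat) (v : 'rV[R]_K) : 0 <= \sum_i v 0 i ^+ 2.
Proof. by apply: sumr_ge0 => i _; exact: sqr_ge0. Qed.

Lemma eucl_norm_ge0 (K : nat) (v : 'rV[R]_K) : 0 <= eucl_norm v.
Proof. exact: sqrtr_ge0. Qed.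

Lemma eucl_normN (K : nat) (v : 'rV[R]_K) : eucl_norm (- v) = eucl_norm v.
Proof. by congr Num.sqrt; apply: eq_bigr => i _; rewrite mxE sqrrN. Qed.

Lemma ler_eucl_normD (K : nat) (u v : 'rV[R]_K) :
  eucl_norm (u + v) <= eucl_norm u + eucl_norm v.
Proof.
rewrite /eucl_norm.
set A := \sum_i u 0 i ^+ 2; set B := \sum_i v 0 i ^+ 2.
have A0 : 0 <= A := sum_sqr_ge0 u.
have B0 : 0 <= B := sum_sqr_ge0 v.
have dot_le : \sum_i u 0 i * v 0 i <= Num.sqrt A * Num.sqrt B.
  apply: (le_trans (ler_norm _)).
  rewrite -sqrtrM // -sqrtr_sqr ler_sqrt ?mulr_ge0 //.
  exact: CauchySchwarz_sum.
have sumD : \sum_i (u + v) 0 i ^+ 2 = A + B + 2 * \sum_i u 0 i * v 0 i.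
  rewrite /A /B mulr_sumr -!big_split /=; apply: eq_bigr => i _.
  by rewrite mxE; ring.
rewrite -[X in _ <= X]ger0_norm ?addr_ge0 ?sqrtr_ge0 // -sqrtr_sqr.
rewrite ler_sqrt ?sqr_ge0 // sumD sqrrD !sqr_sqrtr //.
rewrite -mulr_natl; lra.
Qed.

Lemma ler_coord_eucl_norm (K : nat) (v : 'rV[R]_K) (k : 'I_K) :
  `|v 0 k| <= eucl_norm v.
Proof.
rewrite /eucl_norm -sqrtr_sqr ler_sqrt ?sum_sqr_ge0 // (bigD1 k) //= lerDl.
by apply: sumr_ge0 => i _; exact: sqr_ge0.
Qed.

Lemma eucl_norm_le_coord_bound (K : nat) (v : 'rV[R]_K) (b : R) :
  0 <= b -> (forall i, `|v 0 i| <= b) -> eucl_norm v <= K%:R * b.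
Proof.
move=> b0 vb; rewrite /eucl_norm -[X in _ <= X]ger0_norm ?mulr_ge0 //.
rewrite -sqrtr_sqr ler_sqrt ?sqr_ge0 //.
apply: (@le_trans _ _ (\sum_(i < K) b ^+ 2)).
  by apply: ler_sum => i _; rewrite -real_normK ?num_real // ler_sqr ?nnegrE ?normr_ge0.
rewrite sumr_const card_ord -[_ *+ K]mulr_natl exprMn ler_wpM2r ?sqr_ge0 //.
by rewrite -natrX ler_nat; case: (K) => // n; rewrite leq_pmull.
Qed.

End EuclideanNorm.

Section Distance.
Variables (R : realType) (K : nat) (W : set 'rV[R]_K).
Hypothesis W0 : W !=set0.

Lemma eucl_dist_le_norm (v w : 'rV[R]_K) : W w -> eucl_dist v W <= eucl_norm (v - w).
Proof.
move=> Ww; apply: ge_inf; last by exists w.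
by exists 0 => _ [? _ <-]; exact: eucl_norm_ge0.
Qed.

Lemma eucl_dist_lipschitz (u v : 'rV[R]_K) :
  eucl_dist u W <= eucl_dist v W + eucl_norm (u - v).
Proof.
have [w0 Ww0] := W0; rewrite -lerBlDr; apply: lb_le_inf.
  by exists (eucl_norm (v - w0)), w0.
move=> _ [w Ww <-]; rewrite lerBlDr.
apply: (le_trans (eucl_dist_le_norm u Ww)).
have -> : u - w = (v - w) + (u - v) by rewrite [RHS]addrC addrA subrK.
exact: ler_eucl_normD.
Qed.

Lemma inf_coord_le_eucl_dist (v : 'rV[R]_K) (k : 'I_K) :
  has_lbound [set w 0 k | w in W] ->
  inf [set w 0 k | w in W] <= v 0 k + eucl_dist v W.
Proof.
have [w0 Ww0] := W0; move=> lbW; rewrite -lerBlDl; apply: lb_le_inf.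
  by exists (eucl_norm (v - w0)), w0.
move=> _ [w Ww <-]; rewrite lerBlDl.
have inf_le : inf [set w 0 k | w in W] <= w 0 k by apply: ge_inf => //; exists w.
have := ler_coord_eucl_norm (v - w) k; rewrite !mxE ler_norml => /andP[lo _]; lra.
Qed.

End Distance.

Section Measurability.
Context d (T : measurableType d) (R : realType).
Implicit Types f g : T -> R.

Lemma measurable_set_ltr f g : measurable_fun setT f -> measurable_fun setT g ->
  measurable [set t | f t < g t].
Proof.
move=> mf mg; have mtrue : measurable [set true] by [].
by have := measurable_fun_ltr mf mg measurableT mtrue; rewrite setTI.
Qed.

Lemma measurable_set_ler f g : measurable_fun setT f -> measurable_fun setT g ->
  measurable [set t | f t <= g t].
Proof.
move=> mf mg; have mtrue : measurable [set true] by [].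
by have := measurable_fun_ler mf mg measurableT mtrue; rewrite setTI.
Qed.

Lemma sigma_measurable_measurable_fun dD (DT : measurableType dD) (D : T -> DT) f :
  measurable_fun setT D -> sigma_measurable D f -> measurable_fun setT f.
Proof.
move=> mD sf _ B mB; have [A [mA ->]] := sf B mB.
exact: mD measurableT A mA.
Qed.

Lemma measurable_bigmax (I : Type) (s : seq I) (h : I -> T -> R) :
  (forall i, measurable_fun setT (h i)) ->
  measurable_fun setT (fun t => \big[Num.max/0]_(i <- s) h i t).
Proof.
move=> mh; elim: s => [|i s IHs].
  by under eq_fun do rewrite big_nil; exact: measurable_cst.
by under eq_fun do rewrite big_cons; exact: measurable_maxr.
Qed.

End Measurability.

Section RationalGrid.
Variables (R : realType) (K : nat).

Definition rat_row (m : nat) : 'rV[R]_K :=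
  if unpickle m is Some q then map_mx (ratr : rat -> R) q else 0.

Lemma rat_row_dense (v : 'rV[R]_K) (e : R) : 0 < e ->
  exists m, eucl_norm (v - rat_row m) < e.
Proof.
move=> e0; pose b := e / (K%:R + 1).
have b0 : 0 < b by rewrite divr_gt0 // ltr_wpDl.
have /choice[q qP] : forall i : 'I_K, exists q : rat, ratr q \in `]v 0 i - b, v 0 i + b[.
  by move=> i; apply: rat_in_itvoo; rewrite ltrD2l gtrN.
exists (pickle (\row_i q i)); rewrite /rat_row pickleK.
apply: (le_lt_trans (eucl_norm_le_coord_bound (ltW b0) _)).
  move=> i; rewrite !mxE ler_norml; move: (qP i); rewrite in_itv /=.
  by move=> /andP[? ?]; apply/andP; split; lra.
by rewrite /b mulrA ltr_pdivrMr ?ltr_wpDl // mulrC ltr_pM2l // ltrDl.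
Qed.

End RationalGrid.
Arguments rat_row {R K} m.

Section MeasurableDistance.
Context d (T : measurableType d) (R : realType) (K : nat).
Variable F : T -> 'rV[R]_K.
Hypothesis mF : forall k, measurable_fun setT (fun t => F t 0 k).

Lemma measurable_eucl_norm_sub (q : 'rV[R]_K) :
  measurable_fun setT (fun t => eucl_norm (F t - q)).
Proof.
apply: (measurableT_comp (continuous_measurable_fun (@sqrt_continuous R))).
apply: measurable_sum => i; under eq_fun do rewrite !mxE expr2.
by apply: measurable_funM; apply: measurable_funB.
Qed.

(* The distance is 1-Lipschitz, so it is determined by its values along the
   countable dense family [rat_row]. *)
Lemma measurable_eucl_dist (W : set 'rV[R]_K) : W !=set0 ->
  measurable_fun setT (fun t => eucl_dist (F t) W).
Proof.
move=> W0; apply: (measurability _ (RGenOInfty.measurableE R)) => //.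
move=> /= _ [_ [a ->] <-]; rewrite setTI preimage_itvoy.
rewrite [X in measurable X](_ : _ = \bigcup_j \bigcap_m
    [set t | a + j.+1%:R^-1 <= eucl_dist (rat_row m) W + eucl_norm (F t - rat_row m)]).
  apply: bigcupT_measurable => j; apply: bigcapT_measurable => m.
  apply: measurable_set_ler; first exact: measurable_cst.
  by apply: measurable_funD => //; exact: measurable_eucl_norm_sub.
apply/seteqP; split => t /=.
  move=> /ltr_add_invr [j aj]; exists j => // m _ /=.
  exact: le_trans (ltW aj) (eucl_dist_lipschitz W0 _ _).
move=> [j _ ajm]; rewrite ltNge; apply/negP => dist_le.
have e0 : 0 < j.+1%:R^-1 / 2 :> R by rewrite divr_gt0 // invr_gt0.
have [m mclose] := rat_row_dense (F t) e0.
have := ajm m I; have := eucl_dist_lipschitz W0 (rat_row m) (F t).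
rewrite -opprB eucl_normN /=.
move: mclose dist_le; set x := eucl_norm _; set c := j.+1%:R^-1; lra.
Qed.

End MeasurableDistance.

Section FiniteProbability.
Context d (T : measurableType d) (R : realType) (P : probability T R).
Implicit Types A B : set T.

Lemma fine_probabilityK A : measurable A -> (fine (P A))%:E = P A.
Proof. by move=> mA; rewrite fineK // fin_num_measure. Qed.

Lemma le_fine_probability A B : measurable A -> measurable B -> A `<=` B ->
  fine (P A) <= fine (P B).
Proof.
move=> mA mB AB; rewrite -lee_fin !fine_probabilityK //.
by apply: le_measure => //; rewrite inE.
Qed.

Lemma fine_probabilityDI A B : measurable A -> measurable B ->
  fine (P A) = fine (P (A `\` B)) + fine (P (A `&` B)).
Proof.
move=> mA mB; apply: EFin_inj.
by rewrite EFinD !fine_probabilityK //;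
  [exact: measureDI | exact: measurableI | exact: measurableD].
Qed.

Lemma fine_probabilityC A : measurable A -> fine (P (~` A)) = 1 - fine (P A).
Proof.
move=> mA; apply: EFin_inj.
by rewrite EFinB !fine_probabilityK ?probability_setC //; exact: measurableC.
Qed.

(* Splitting on the [sigma(D)]-measurable event [{c < g}]: off it the
   conditional probability is at most [c], on it we bound [E] by the event. *)
Lemma cond_prob_le_threshold dD (DT : measurableType dD) (D : T -> DT)
    (E : set T) (g : T -> R) (c : R) :
  measurable_fun setT D -> measurable E -> is_cond_prob P D E g -> 0 <= c ->
  fine (P E) <= c + fine (P [set t | c < g t]).
Proof.
move=> mD mE [sg intg condE] c0.
have [A [mA gA]] := sg _ (measurable_itv `]c, +oo[).
have gcE : [set t | c < g t] = D @^-1` A.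
  by rewrite -gA; apply/seteqP; split => t /=; rewrite in_itv /= andbT.
have mDA : measurable (D @^-1` A) by rewrite -[_ @^-1` _]setTI; exact: mD.
have mDAC : measurable (D @^-1` ~` A) by rewrite -[_ @^-1` _]setTI; exact/mD/measurableC.
rewrite gcE (fine_probabilityDI mE mDA); apply: lerD; last first.
  exact: le_fine_probability (measurableI _ _ mE mDA) mDA (@subIsetr _ _ _).
have -> : E `\` D @^-1` A = E `&` D @^-1` ~` A by rewrite preimage_setC.
rewrite -lee_fin fine_probabilityK; last exact: measurableI.
rewrite -condE; last exact: measurableC.
apply: (@le_trans _ _ (\int[P]_(t in D @^-1` ~` A) (cst c%:E) t)%E).
  apply: le_integral => //; first exact: integrableS intg.
    exact: finite_measure_integrable_cst.
  move=> t; rewrite inE /= => tNA; rewrite lee_fin leNgt; apply/negP => ct.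
  by apply: tNA; have : [set t | c < g t] t := ct; rewrite gcE.
rewrite integral_cst // muleC; apply: gee_pMl => //.
  by rewrite fin_num_measure.
exact: probability_le1.
Qed.

End FiniteProbability.

Lemma limn_einf_ge_near (R : realType) (u : (\bar R)^nat) (l : \bar R) :
  (\forall n \near \oo, (l <= u n)%E) -> (l <= limn_einf u)%E.
Proof.
move=> [N _ lu]; rewrite limn_einf_lim (cvg_lim _ (@cvg_einfs_sup _ u)) //.
apply: (@le_trans _ _ (einfs u N)); last by apply: ereal_sup_ubound; exists N.
by apply: le_ereal_inf_tmp => _ [k Nk <-]; exact: lu.
Qed.

Lemma cvg_in_prob0_near d (T : measurableType d) (R : realType)
    (P : probability T R) (Z : nat -> T -> R) (eps e : R) :
  (forall n, measurable_fun setT (Z n)) -> cvg_in_prob P Z 0 -> 0 < eps -> 0 < e ->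
  \forall n \near \oo, fine (P [set t | eps < Z n t]) < e.
Proof.
move=> mZ Z0 eps0 e0; have /fine_cvgP[_ PZ0] := Z0 eps eps0.
apply: filterS (cvgr_lt _ PZ0 _ e0) => n; apply: le_lt_trans.
apply: le_fine_probability.
- exact: measurable_set_ltr (measurable_cst _) (mZ n).
- apply: measurable_set_ltr; first exact: measurable_cst.
  by apply: measurableT_comp => //; exact: measurable_funB.
by move=> t /= epsZ; rewrite subr0 (lt_le_trans epsZ) ?ler_norm.
Qed.

Lemma Ccomb_weight_gt_half (R : realType) (K : nat) (w : 'rV[R]_K)
    (Cs : 'I_K -> set R) (y : R) (k : 'I_K) :
  simplex K w -> y \in Cs k -> 1 / 2 < w 0 k -> y \in Ccomb w Cs.
Proof.
move=> [w_ge0 _] yk wk; rewrite in_setE /Ccomb /=.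
apply: (lt_le_trans wk); rewrite (bigD1 k) //= yk mulr1 lerDl.
by apply: sumr_ge0 => i _; rewrite mulr_ge0.
Qed.

Section CombinedSetBound.
Context d (T : measurableType d) (R : realType) (P : probability T R) (K : nat).
Context dD (DT : measurableType dD) (D : T -> DT).
Hypothesis mD : measurable_fun setT D.
Variables (Y : T -> R) (Cs : T -> 'I_K -> set R).
Hypothesis mCs : forall k, measurable [set t | Y t \in Cs t k].
Variable w : T -> 'rV[R]_K.
Hypothesis mw : forall k, sigma_measurable D (fun t => w t 0 k).
Hypothesis w_simplex : forall t, simplex K (w t).
Variables (g : 'I_K -> T -> R) (alpha : R).
Hypothesis g_cond : forall k, is_cond_prob P D [set t | Y t \notin Cs t k] (g k).
Variable W : set 'rV[R]_K.
Hypotheses (W0 : W !=set0) (W_simplex : W `<=` simplex K).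

Let mw_coord k : measurable_fun setT (fun t => w t 0 k) :=
  sigma_measurable_measurable_fun mD (mw k).

Local Notation Comb := [set t | Y t \in Ccomb (w t) (Cs t)].
Local Notation dev t := (\big[Num.max/0]_(i < K) `|g i t - alpha|).

Let mg k : measurable_fun setT (g k).
Proof. by have [sg _ _] := g_cond k; exact: sigma_measurable_measurable_fun sg. Qed.

Lemma measurable_Ccomb_event : measurable Comb.
Proof.
have indicE t : \sum_(k < K) w t 0 k * (Y t \in Cs t k)%:R =
    \sum_(k < K) w t 0 k * \1_[set t | Y t \in Cs t k] t.
  apply: eq_bigr => k _; rewrite /indic; case: (boolP (Y t \in Cs t k)) => Ytk.
    by rewrite mem_set.
  by rewrite memNset //; exact/negP.
rewrite (_ : Comb = [set t | 1 / 2 < \sum_(k < K) w t 0 k * \1_[set t | Y t \in Cs t k] t]).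
  apply: measurable_set_ltr; first exact: measurable_cst.
  by apply: measurable_sum => k; apply: measurable_funM => //; exact: measurable_indic.
by apply/seteqP; split => t; rewrite /= in_setE /Ccomb /= indicE.
Qed.

Lemma measurable_cond_prob_dev : measurable_fun setT (fun t => dev t).
Proof.
apply: measurable_bigmax => k.
by apply: measurableT_comp => //; apply: measurable_funB.
Qed.

Lemma measurable_dist_weights : measurable_fun setT (fun t => eucl_dist (w t) W).
Proof. exact: measurable_eucl_dist. Qed.

Lemma prob_miscover_le (k : 'I_K) (e : R) : 0 <= alpha + e ->
  fine (P [set t | Y t \notin Cs t k]) <= alpha + e + fine (P [set t | e < dev t]).
Proof.
move=> c0; have mNG : measurable [set t | Y t \notin Cs t k].
  rewrite (_ : [set t | _] = ~` [set t | Y t \in Cs t k]); first exact/measurableC/mCs.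
  by apply/seteqP; split => t /= /negP.
apply: le_trans (cond_prob_le_threshold mD mNG (g_cond k) c0) _.
rewrite lerD2l le_fine_probability //.
- by apply: measurable_set_ltr; [exact: measurable_cst | exact: mg].
- by apply: measurable_set_ltr; [exact: measurable_cst | exact: measurable_cond_prob_dev].
move=> t /= gt; apply: (lt_le_trans _ (le_bigmax _ _ k)) => /=.
by apply: lt_le_trans (ler_norm _); rewrite ltrBrDl.
Qed.

(* Where [w_k > 1/2] the combined set contains [Cs k]; where [w_k <= 1/2] the
   weights are at distance at least [inf_W v_k - 1/2 > r] from [W]. *)
Lemma prob_cover_le (k : 'I_K) (r : R) : r < inf [set v 0 k | v in W] - 1 / 2 ->
  fine (P [set t | Y t \in Cs t k]) <=
    fine (P Comb) + fine (P [set t | r < eucl_dist (w t) W]).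
Proof.
move=> r_lt; set S := [set t | w t 0 k <= 1 / 2].
have mS : measurable S by apply: measurable_set_ler => //; exact: measurable_cst.
rewrite (fine_probabilityDI P (mCs k) mS); apply: lerD.
  apply: le_fine_probability; [exact: measurableD | exact: measurable_Ccomb_event |].
  move=> t [/= Ytk St]; apply: Ccomb_weight_gt_half Ytk _ => //.
  by rewrite ltNge; apply/negP.
apply: le_fine_probability; [exact: measurableI | |].
  by apply: measurable_set_ltr; [exact: measurable_cst | exact: measurable_dist_weights].
move=> t [_]; rewrite /S /= => wk.
have lbW : has_lbound [set v 0 k | v in W].
  by exists 0 => _ [v Wv <-]; have [+ _] := W_simplex Wv; apply.
have := inf_coord_le_eucl_dist W0 (w t) lbW; lra.
Qed.

Lemma prob_Ccomb_lower_bound (k : 'I_K) (e r : R) :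
  0 <= alpha + e -> r < inf [set v 0 k | v in W] - 1 / 2 ->
  1 - (alpha + e) <= fine (P Comb) + fine (P [set t | e < dev t])
    + fine (P [set t | r < eucl_dist (w t) W]).
Proof.
move=> c0 r_lt; have := prob_cover_le r_lt; have := prob_miscover_le k c0.
have -> : [set t | Y t \notin Cs t k] = ~` [set t | Y t \in Cs t k].
  by apply/seteqP; split => t /= /negP.
rewrite fine_probabilityC; [lra | exact: mCs].
Qed.

End CombinedSetBound.

Theorem theorem3
  (d : measure_display) (T : measurableType d) (R : realType)
  (P : probability T R)
  (K : nat) (HK : (2 <= K)%N) (alpha : R) (Ha0 : 0 < alpha) (Ha1 : alpha < 1)
  (p : nat)
  (dD : measure_display) (DT : nat -> measurableType dD)
  (D : forall n, T -> DT n) (HD : forall n, measurable_fun setT (D n))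
  (X : T -> 'rV[R]_p) (Y : T -> R) (HY : measurable_fun setT Y)
  (C : forall n, 'I_K -> DT n -> 'rV[R]_p -> set R)
  (HCmeas : forall n k, measurable [set t | Y t \in C n k (D n t) (X t)])
  (what : nat -> T -> 'rV[R]_K)
  (Hwmeas : forall n k, sigma_measurable (D n) (fun t => what n t 0 k))
  (Hwsimp : forall n t, simplex K (what n t))
  (Wstar : set 'rV[R]_K)
  (HW0 : Wstar !=set0) (HWc : closed Wstar) (HWconv : convex_set Wstar)
  (HWs : Wstar `<=` simplex K)
  (* A1' : for versions g n k of Pr(Y \notin C_k(X; D_n) | D_n) *)
  (g : nat -> 'I_K -> T -> R)
  (Hg : forall n k, is_cond_prob P (D n)
          [set t | Y t \notin C n k (D n t) (X t)] (g n k))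
  (HA1 : cvg_in_prob P
          (fun n t => \big[Num.max/0]_(k < K) `|g n k t - alpha|) 0)
  (* A2 *)
  (HA2 : cvg_in_prob P (fun n t => eucl_dist (what n t) Wstar) 0)
  (kstar : 'I_K)
  (Hk : 1 / 2 < inf [set w 0 kstar | w in Wstar]) :
  ((1 - alpha)%:E <=
    limn_einf (fun n => P [set t | Y t \in
       Ccomb (what n t) (fun k => C n k (D n t) (X t))]))%E.
Proof.
pose delta := inf [set w 0 kstar | w in Wstar] - 1 / 2.
have delta2 : 0 < delta / 2 by rewrite divr_gt0 // subr_gt0.
apply/lee_addgt0Pr => e e0; have e3 : 0 < e / 3 by rewrite divr_gt0.
rewrite -leeBlDr // -EFinB; apply: limn_einf_ge_near.
have dev_small := cvg_in_prob0_near
  (fun n => measurable_cond_prob_dev (HD n) alpha (Hg n)) HA1 e3 e3.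
have dist_small := cvg_in_prob0_near
  (fun n => measurable_dist_weights (HD n) (Hwmeas n) HW0) HA2 delta2 e3.
have c0 : 0 <= alpha + e / 3 by rewrite addr_ge0 ?ltW.
have r_lt : delta / 2 < inf [set w 0 kstar | w in Wstar] - 1 / 2.
  by rewrite -/delta; lra.
apply: filterS2 dev_small dist_small => n /= dev_n dist_n.
rewrite -fine_probabilityK ?lee_fin; last exact: measurable_Ccomb_event.
have := prob_Ccomb_lower_bound (HD n) (HCmeas n) (Hwmeas n) (Hwsimp n) (Hg n)
  HW0 HWs c0 r_lt.
lra.
Qed.
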